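(* Let $q\in\mathbb{C}$ with $|q|<1$ and let $k,l\ge0$ be integers. Then for $x\in[0,1]$, $$B_{k,l}(x,q)=\frac{x^k}{[k]_q!}\sum_{m=0}^l\frac{[m]_q!}{m!}\binom{l}{m}_q\beta_{l-m}^{(k)}((1-x)_q,q)\,\Delta^k0^m,$$ where $\Delta^k0^m=\sum_{j=0}^k\binom{k}{j}(-1)^{k-j}j^m$ (with $0^0=1$).
   Context: For a number $x$, $[x]_q=\frac{1-q^x}{1-q}$; $[n]_q!=[n]_q\cdots[1]_q$, $[0]_q!=1$; $\binom{n}{k}_q=\frac{[n]_q!}{[k]_q![n-k]_q!}$ for $0\le k\le n$ and $0$ for $k>n$. $(1-b)_q^n=\prod_{i=1}^n(1-bq^{i-1})$. $B_{k,n}(x,q)=\binom{n}{k}_q x^k(1-x)_q^{n-k}$ if $n\ge k$ and $0$ if $n<k$. $\Delta^k0^m$ is the $k$-th forward difference ($\Delta f(y)=f(y+1)-f(y)$) of $y\mapsto y^m$ at $y=0$. $B_m^{(k)}$ are the Bernoulli numbers of order $k$: $\left(\frac{t}{e^t-1}\right)^k=\sum_{m\ge0}B_m^{(k)}\frac{t^m}{m!}$. The symbol $\beta_n^{(k)}((1-x)_q,q)$ means $\sum_{m=0}^n\binom{n}{m}_q\frac{[m]_q!}{m!}B_m^{(k)}(1-x)_q^{n-m}$, i.e. the $q$-Bernoulli polynomial of order $k$, $\beta_n^{(k)}(y,q)=\sum_{m=0}^n\binom{n}{m}_q\frac{[m]_q!}{m!}B_m^{(k)}y^{n-m}$ (defined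 by $\left(\frac{z}{e^z-1}\right)^k\sum_{j\ge0}\frac{y^jz^j}{[j]_q!}=\sum_{n\ge0}\beta_n^{(k)}(y,q)\frac{z^n}{[n]_q!}$), with each power $y^j$ replaced umbrally by $(1-x)_q^j$. *)

(* Complex numbers are 'R[i] = complex R for a real closed
   field R (with R the reals this is C). *)
From HB Require Import structures.
From mathcomp Require Import all_boot all_order all_algebra.
From mathcomp Require Import complex.
Set Implicit Arguments. Unset Strict Implicit. Unset Printing Implicit Defensive.
Import Order.TTheory GRing.Theory Num.Theory.
Local Open Scope ring_scope.

Section QDefs.
Variable F : fieldType.

Definition qnum (q : F) (n : nat) : F := (1 - q ^+ n) / (1 - q).
Definition qfact (q : F) (n : nat) : F := \prod_(i < n) qnum q i.+1.
Definition qbinom (q : F) (n k : nat) : F :=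
  if (k <= n)%N then qfact q n / (qfact q k * qfact q (n - k)) else 0.
(* (1 - b)_q^n = prod_{i=1}^n (1 - b q^(i-1)) *)
Definition qpoch (b q : F) (n : nat) : F := \prod_(i < n) (1 - b * q ^+ i).
Definition qBernstein (k n : nat) (x q : F) : F :=
  if (k <= n)%N then qbinom q n k * x ^+ k * qpoch x q (n - k) else 0.
End QDefs.

(* Bernoulli numbers B_m (order 1), t/(e^t-1) = sum B_m t^m/m!, via the
   coefficient identity sum_{j=0}^{m} C(m+1,j) B_j = [m = 0]. *)
Fixpoint bern_seq (n : nat) : seq rat :=
  match n with
  | 0 => [::]
  | n'.+1 =>
      let s := bern_seq n' in
      rcons s (((n' == 0)%N)%:R
               - (n'.+1%:R)^-1 * \sum_(j < n') ('C(n'.+1, j))%:R * s`_j)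
  end.
Definition bern1 (m : nat) : rat := (bern_seq m.+1)`_m.

(* Bernoulli numbers of order k: (t/(e^t-1))^k = sum B_m^(k) t^m/m!,
   the k-th power of the exponential generating function computed as an
   iterated binomial convolution (product of EGFs). *)
Fixpoint bernk (k m : nat) : rat :=
  match k with
  | 0 => ((m == 0)%N)%:R
  | k'.+1 => \sum_(j < m.+1) ('C(m, j))%:R * bernk k' j * bern1 (m - j)
  end.

Section QBeta.
Variable F : fieldType.
(* beta_n^(k)(y,q) with y^j replaced umbrally by (1-x)_q^j *)
Definition qbeta_umbral (k n : nat) (x q : F) : F :=
  \sum_(m < n.+1) qbinom q n m * (qfact q m / (m`!)%:R) * ratr (bernk k m)
                  * qpoch x q (n - m).
Definition delta0 (k m : nat) : F :=
  \sum_(j < k.+1) ('C(k, j))%:R * (-1) ^+ (k - j) * (j%:R) ^+ m.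
End QBeta.

(* Expanding beta_{l-m}^{(k)} and setting n = m + j, the sum becomes
   sum_n [l]!/[l-n]! (1-x)_q^{l-n} / n! * sum_{m+j=n} C(n,m) Delta^k 0^m B^{(k)}_j.
   The inner binomial convolution is n! times the t^n coefficient of the
   product of exponential generating functions (e^t - 1)^k (t/(e^t - 1))^k = t^k,
   so only n = k survives, which is [l]!/[l-k]! (1-x)_q^{l-k} = [k]! B_{k,l}/x^k.
   The generating functions are handled as polynomials truncated at a fixed
   order, so that no power series are needed. *)
From mathcomp Require Import all_boot all_order all_algebra.
From mathcomp Require Import complex ring.
Set Implicit Arguments. Unset Strict Implicit. Unset Printing Implicit Defensive.
Import Order.TTheory GRing.Theory Num.Theory.
Local Open Scope ring_scope.

Lemma size_bern_seq n : size (bern_seq n) = n.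
Proof. by elim: n => [|n IH] //=; rewrite size_rcons IH. Qed.

Lemma nth_bern_seq n j : (j < n)%N -> (bern_seq n)`_j = bern1 j.
Proof.
elim: n => [|n IH] //; rewrite ltnS leq_eqVlt => /orP[/eqP -> // | ltjn].
by rewrite /= nth_rcons size_bern_seq ltjn IH.
Qed.

Lemma bern1_rec n :
  \sum_(j < n.+1) ('C(n.+1, j))%:R * bern1 j = (n == 0)%:R :> rat.
Proof.
rewrite big_ord_recr /= binSn.
have -> : bern1 n = (n == 0)%:R
    - (n.+1%:R)^-1 * \sum_(j < n) ('C(n.+1, j))%:R * bern1 j.
  rewrite /bern1 /= nth_rcons size_bern_seq ltnn eqxx; congr (_ - _ * _).
  by apply: eq_bigr => -[j ltjn] _; rewrite nth_bern_seq.
have n1_neq0 : n.+1%:R != 0 :> rat by rewrite pnatr_eq0.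
rewrite mulrBr mulrA mulfV // mul1r addrC subrK.
by case: n n1_neq0 => [|n] _ /=; rewrite ?mul1r ?mulr0.
Qed.

Lemma take_poly_idem (R : nzSemiRingType) n (p : {poly R}) :
  take_poly n (take_poly n p) = take_poly n p.
Proof. exact/take_poly_id/size_take_poly. Qed.

Lemma take_polyM_take (R : nzSemiRingType) n (p q : {poly R}) :
  take_poly n (take_poly n p * take_poly n q) = take_poly n (p * q).
Proof.
apply/polyP => i; rewrite !coef_take_poly; case: ltnP => // ltin.
rewrite !coefM; apply: eq_bigr => -[j /=]; rewrite ltnS => leji _.
by rewrite !coef_take_poly (leq_ltn_trans leji) ?(leq_ltn_trans (leq_subr j i)).
Qed.

Lemma take_polyX_take (R : nzSemiRingType) n (p : {poly R}) m :
  take_poly n (take_poly n p ^+ m) = take_poly n (p ^+ m).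
Proof.
elim: m => [|m IH]; first by rewrite !expr0.
by rewrite !exprS -take_polyM_take IH take_poly_idem take_polyM_take.
Qed.

Section TruncatedEgf.
Variables (F : numFieldType) (N : nat).

Definition egf (a : nat -> F) : {poly F} := \poly_(i < N) (a i / (i`!)%:R).

Local Notation exp1 := (egf (fun=> 1)).

Lemma take_egf a : take_poly N (egf a) = egf a.
Proof. exact/take_poly_id/size_poly. Qed.

Lemma natr_fact_neq0 n : (n`!)%:R != 0 :> F.
Proof. by rewrite pnatr_eq0 -lt0n fact_gt0. Qed.

Lemma coef_egfM a b n : (n < N)%N ->
  (egf a * egf b)`_n =
    (\sum_(j < n.+1) ('C(n, j))%:R * a j * b (n - j)%N) / (n`!)%:R.
Proof.
move=> ltnN; rewrite coefM mulr_suml; apply: eq_bigr => -[j /=]; rewrite ltnS => lejn _.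
rewrite !coef_poly (leq_ltn_trans lejn ltnN) (leq_ltn_trans (leq_subr _ _) ltnN).
rewrite -(bin_fact lejn) !natrM.
have := natr_fact_neq0 j; have := natr_fact_neq0 (n - j).
have : 'C(n, j)%:R != 0 :> F by rewrite pnatr_eq0 -lt0n bin_gt0.
move=> ? ? ?; field; by apply/and3P.
Qed.

Lemma egf_expX j : take_poly N (exp1 ^+ j) = egf (fun n => j%:R ^+ n).
Proof.
elim: j => [|j IH].
  apply/polyP => i; rewrite coef_take_poly coef_poly coefC.
  by case: i => [|i]; case: ifP; rewrite ?expr0n ?fact0 ?divr1 ?mul0r.
rewrite exprSr -take_polyM_take IH take_egf.
apply/polyP => i; rewrite coef_take_poly coef_poly; case: ifP => // ltiN.
rewrite coef_egfM // -natr1 addrC exprDn; congr (_ / _); apply: eq_bigr => m _.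
by rewrite expr1n mul1r mulr1 mulr_natl.
Qed.

Lemma egf_delta0 k : egf (delta0 F k) = take_poly N ((exp1 - 1) ^+ k).
Proof.
rewrite -polyCN addrC exprDn take_poly_sum; apply/polyP => i.
rewrite coef_poly coef_sum; case: ifP => ltiN; last first.
  by rewrite big1 // => j _; rewrite coef_take_poly ltiN.
rewrite /delta0 mulr_suml; apply: eq_bigr => j _.
have := congr1 (fun p : {poly F} => p`_i) (egf_expX j).
rewrite coef_take_poly coef_take_poly ltiN coefMn -polyC_exp coefCM coef_poly ltiN => ->.
by rewrite mulr_natl -!mulrnAl mulrA.
Qed.

Local Notation bern1F := (fun m => ratr (bern1 m) : F).

Lemma egf_bernk k :
  egf (fun m => ratr (bernk k m)) = take_poly N (egf bern1F ^+ k).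
Proof.
elim: k => [|k IH].
  apply/polyP => i; rewrite coef_take_poly coef_poly coefC.
  by case: i => [|i]; case: ifP; rewrite ?fact0 ?divr1 ?rmorph1 ?rmorph0 ?mul0r.
rewrite exprSr -take_polyM_take -IH take_egf; apply/polyP => i.
rewrite coef_take_poly coef_poly; case: ifP => // ltiN.
rewrite coef_egfM // rmorph_sum; congr (_ / _); apply: eq_bigr => j _.
by rewrite !rmorphM /= ratr_nat.
Qed.

Lemma egf_bern1_mul_expm1 :
  take_poly N (egf bern1F * (exp1 - 1)) = take_poly N 'X.
Proof.
apply/polyP => i; rewrite !coef_take_poly; case: ifP => // ltiN.
rewrite mulrBr mulr1 coefB coef_egfM // coef_poly ltiN coefX.
case: i ltiN => [|n] ltiN.
  by rewrite big_ord1 mulr1 mul1r subrr.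
rewrite big_ord_recr /= binn mul1r !mulr1 mulrDl addrK.
under eq_bigr do rewrite mulr1.
have := congr1 (@ratr F) (bern1_rec n); rewrite rmorph_sum ratr_nat => /=.
under eq_bigr do rewrite rmorphM /= ratr_nat.
move=> ->; rewrite eqSS.
by case: n {ltiN} => [|n]; rewrite ?fact1 ?divr1 ?mul0r.
Qed.

End TruncatedEgf.

Lemma sum_delta0_bernk (F : numFieldType) k n :
  \sum_(j < n.+1) ('C(n, j))%:R * delta0 F k j * ratr (bernk k (n - j))
    = (n == k)%:R * (n`!)%:R.
Proof.
have egf_prod : take_poly n.+1
    (egf n.+1 (delta0 F k) * egf n.+1 (fun m => ratr (bernk k m)))
    = take_poly n.+1 'X^k.
  rewrite egf_delta0 egf_bernk take_polyM_take mulrC -exprMn.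
  by rewrite -[LHS]take_polyX_take egf_bern1_mul_expm1 take_polyX_take.
have := congr1 (fun p : {poly F} => p`_n) egf_prod.
rewrite !coef_take_poly ltnSn coef_egfM // coefXn => <-.
by rewrite divfK // natr_fact_neq0.
Qed.

Lemma sum_triangle (V : nmodType) (f : nat -> nat -> V) L :
  \sum_(m < L) \sum_(j < L - m) f m (m + j)%N
    = \sum_(n < L) \sum_(m < n.+1) f m n.
Proof.
elim: L => [|L IH]; first by rewrite !big_ord0.
rewrite [RHS]big_ord_recr /= -IH.
have -> : \sum_(m < L.+1) \sum_(j < L.+1 - m) f m (m + j)%N
    = \sum_(m < L.+1) (\sum_(j < L - m) f m (m + j)%N + f m L).
  apply: eq_bigr => -[m /=]; rewrite ltnS => lemL _.
  by rewrite subSn // big_ord_recr /= subnKC.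
by rewrite big_split /= big_ord_recr /= subnn big_ord0 addr0.
Qed.

Lemma qfact_neq0 (F : numFieldType) (q : F) n : `|q| < 1 -> qfact q n != 0.
Proof.
move=> q_lt1; have qX_neq1 m : 1 - q ^+ m.+1 != 0.
  rewrite subr_eq0; apply/eqP => qX1.
  have : `|q ^+ m.+1| < 1 by rewrite normrX exprn_ilt1.
  by rewrite -qX1 normr1 ltxx.
rewrite /qfact prodf_seq_neq0; apply/allP => i _.
by rewrite /qnum mulf_neq0 ?invr_neq0 // -[q]expr1.
Qed.

Section QBetaDelta.
Variables (F : numFieldType) (q : F).
Hypothesis qfact_nz : forall n, qfact q n != 0.

Lemma qbinom_mul_qbinom l m j : (m + j <= l)%N ->
  qbinom q l m * qbinom q (l - m) j
    = qfact q l / (qfact q m * qfact q j * qfact q (l - (m + j))).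
Proof.
move=> lemjl; have lejlm : (j <= l - m)%N by rewrite leq_subRL ?(leq_trans (leq_addr j m)).
rewrite /qbinom (leq_trans (leq_addr j m) lemjl) lejlm subnDA.
have := qfact_nz m; have := qfact_nz j; have := qfact_nz (l - m).
have := qfact_nz (l - m - j); move=> ? ? ? ?.
by field; do ![apply/andP; split].
Qed.

Lemma sum_qbeta_delta0 (X : F) k l :
  \sum_(m < l.+1) (qfact q m / (m`!)%:R) * qbinom q l m
                  * qbeta_umbral k (l - m) X q * delta0 F k m
  = if (k <= l)%N then qfact q l / qfact q (l - k) * qpoch X q (l - k) else 0.
Proof.
pose c n := qfact q l / qfact q (l - n) * qpoch X q (l - n).
pose t m n := c n * (('C(n, m))%:R * delta0 F k m * ratr (bernk k (n - m)) / (n`!)%:R).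
transitivity (\sum_(m < l.+1) \sum_(j < l.+1 - m) t m (m + j)%N).
  apply: eq_bigr => -[m /=]; rewrite ltnS => leml _.
  rewrite /qbeta_umbral subSn // mulrAC mulr_sumr.
  apply: eq_bigr => -[j /=]; rewrite ltnS leq_subRL // => lemjl _.
  rewrite /t /c -subnDA addKn -(bin_fact (leq_addr j m)) addKn !natrM.
  transitivity (qbinom q l m * qbinom q (l - m) j * (qfact q m / (m`!)%:R)
    * (qfact q j / (j`!)%:R) * delta0 F k m * ratr (bernk k j)
    * qpoch X q (l - (m + j))); first by ring.
  rewrite qbinom_mul_qbinom //.
  have := qfact_nz m; have := qfact_nz j; have := qfact_nz (l - (m + j)).
  have := natr_fact_neq0 F m; have := natr_fact_neq0 F j.
  have : 'C(m + j, m)%:R != 0 :> F by rewrite pnatr_eq0 -lt0n bin_gt0 leq_addr.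
  by move=> ? ? ? ? ? ?; field; do ![apply/andP; split].
rewrite sum_triangle.
transitivity (\sum_(n < l.+1 | n == k :> nat) c n); last by rewrite big_ord1_eq ltnS.
rewrite [RHS]big_mkcond; apply: eq_bigr => n _.
rewrite -mulr_sumr -mulr_suml sum_delta0_bernk mulfK ?natr_fact_neq0 //.
by rewrite mulr_natr mulrb.
Qed.
End QBetaDelta.

Local Open Scope complex_scope.

Theorem corollary11 (R : rcfType) (q : R[i]) (k l : nat) (x : R) :
  `|q| < 1 -> 0 <= x <= 1 ->
  qBernstein k l x%:C q =
    (x%:C) ^+ k / qfact q k *
    \sum_(m < l.+1) (qfact q m / (m`!)%:R) * qbinom q l m
                    * qbeta_umbral k (l - m) x%:C q * delta0 _ k m.
Proof.
(* Both sides are polynomial in x. *)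
move=> q_lt1 _; have qfact_nz n : qfact q n != 0 by exact: qfact_neq0.
rewrite sum_qbeta_delta0 // /qBernstein.
have [lekl|] := leqP k l; last by rewrite mulr0.
rewrite /qbinom lekl.
have := qfact_nz k; have := qfact_nz (l - k)%N => ? ?.
by field; apply/andP.
Qed.
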